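(* Let $K\subseteq\mathbb R^2$ be a compact set containing no array on three points, let $f\in C(K)$, $\varepsilon>0$, and let $\delta>0$ be such that $|x_1-x_2|<2\delta$ implies $|f(x_1)-f(x_2)|<\varepsilon$ for all $x_1,x_2\in K$. There exists $n_0\in\mathbb N$ such that for every $n\ge n_0$ (and every choice of $f^n$ as in the context) there is a function $g^n:V(\Gamma^n)\to\mathbb R$ with the following properties: (1a) if $u_1u_2$ is an edge of $\Gamma^n_{\mathrm{short}}$ then $|g^n(u_1)-g^n(u_2)|\le\varepsilon$; (1b) if $u_1u_2$ is an edge of $\Gamma^n_{\mathrm{hor}}$ then $|f^n(u_1)-g^n(u_1)|\le\varepsilon$ and $|f^n(u_2)-g^n(u_2)|\le\varepsilon$; (1c) if $u_1u_2$ is an edge of $\Gamma^n_{\mathrm{vert}}$ then $g^n(u_1)=g^n(u_2)=0$; (2) $\max_{u\in V(\Gamma^n)}|g^n(u)|\le\max_{u\in V(\Gamma^n)}|f^n(u)|$.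
   Context: An array on three points is a triple $a_1,a_2,a_3$ of points in the plane with $a_1\ne a_2$, $a_2\ne a_3$, such that the segments $[a_1;a_2]$ and $[a_2;a_3]$ are each parallel to a coordinate axis and are mutually orthogonal. Let $p(x,y)=x$, $q(x,y)=y$; $|\cdot|$ on $\mathbb R^2$ is the Euclidean norm. For $n\in\mathbb N$ the graph $\Gamma^n$ has vertex set all lattice points $u=(i/2^n,j/2^n)$, $i,j\in\mathbb Z$, such that the square $S_u=[i/2^n;(i+1)/2^n)\times[j/2^n;(j+1)/2^n)$ meets $K$, and edges all two-element sets $\{u_1,u_2\}$ of vertices with $|p(u_1)-p(u_2)|\le 1/2^n$ or $|q(u_1)-q(u_2)|\le 1/2^n$. An edge $u_1u_2$ is vertical if $|p(u_1)-p(u_2)|\le1/2^n$, horizontal if $|q(u_1)-q(u_2)|\le1/2^n$, long if $|u_1-u_2|\ge\delta$, short if $|u_1-u_2|<\delta$. $\Gamma^n_{\mathrm{short}}$, $\Gamma^n_{\mathrm{hor}}$, $\Gamma^n_{\mathrm{vert}}$ are the subgraphs formed by all short edges, all long horizontal edges, and all long vertical edges respectively (with their endpoints). The function $f^n:V(\Gamma^n)\to\mathbb R$ is defined by fixing for each vertex $u$ a point $x_u\in K\cap S_u$ and setting $f^n(u)=f(x_u)$. *)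

From HB Require Import structures.
From mathcomp Require Import all_boot all_order all_algebra.
From mathcomp Require Import all_classical all_reals all_analysis.
Set Implicit Arguments. Unset Strict Implicit. Unset Printing Implicit Defensive.
Import Order.TTheory GRing.Theory Num.Theory.
Import numFieldNormedType.Exports.
Local Open Scope classical_set_scope.
Local Open Scope ring_scope.

Section Defs.
Variable R : realType.

Definition eucl (a b : R * R) : R :=
  Num.sqrt ((a.1 - b.1) ^+ 2 + (a.2 - b.2) ^+ 2).

Definition is_array3 (a1 a2 a3 : R * R) : Prop :=
  a1 <> a2 /\ a2 <> a3 /\
  ((a1.2 = a2.2 /\ a2.1 = a3.1) \/ (a1.1 = a2.1 /\ a2.2 = a3.2)).

Definition no_array3 (K : set (R * R)) : Prop :=
  ~ (exists a1 a2 a3, K a1 /\ K a2 /\ K a3 /\ is_array3 a1 a2 a3).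

Definition latpt (n : nat) (ij : int * int) : R * R :=
  (ij.1%:~R / 2 ^+ n, ij.2%:~R / 2 ^+ n).

Definition in_square (n : nat) (ij : int * int) (x : R * R) : Prop :=
  ij.1%:~R / 2 ^+ n <= x.1 < (ij.1 + 1)%:~R / 2 ^+ n /\
  ij.2%:~R / 2 ^+ n <= x.2 < (ij.2 + 1)%:~R / 2 ^+ n.

Definition vertex (K : set (R * R)) (n : nat) (ij : int * int) : Prop :=
  exists x, K x /\ in_square n ij x.

Definition edge (K : set (R * R)) (n : nat) (u1 u2 : int * int) : Prop :=
  vertex K n u1 /\ vertex K n u2 /\ u1 <> u2 /\
  (`|(latpt n u1).1 - (latpt n u2).1| <= 1 / 2 ^+ n \/
   `|(latpt n u1).2 - (latpt n u2).2| <= 1 / 2 ^+ n).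

Definition vertical (n : nat) (u1 u2 : int * int) : Prop :=
  `|(latpt n u1).1 - (latpt n u2).1| <= 1 / 2 ^+ n.
Definition horizontal (n : nat) (u1 u2 : int * int) : Prop :=
  `|(latpt n u1).2 - (latpt n u2).2| <= 1 / 2 ^+ n.
Definition long (delta : R) (n : nat) (u1 u2 : int * int) : Prop :=
  delta <= eucl (latpt n u1) (latpt n u2).
Definition short (delta : R) (n : nat) (u1 u2 : int * int) : Prop :=
  eucl (latpt n u1) (latpt n u2) < delta.

Definition short_edge K delta n u1 u2 := edge K n u1 u2 /\ short delta n u1 u2.
Definition hor_edge K delta n u1 u2 :=
  edge K n u1 u2 /\ long delta n u1 u2 /\ horizontal n u1 u2.
Definition vert_edge K delta n u1 u2 :=
  edge K n u1 u2 /\ long delta n u1 u2 /\ vertical n u1 u2.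

End Defs.

From HB Require Import structures.
From mathcomp Require Import all_boot all_order all_algebra.
From mathcomp Require Import all_classical all_reals all_analysis.
From mathcomp Require Import lra.
Set Implicit Arguments.
Unset Strict Implicit.
Unset Printing Implicit Defensive.
Import Order.TTheory GRing.Theory Num.Theory.
Import numFieldNormedType.Exports.
Local Open Scope classical_set_scope.
Local Open Scope ring_scope.

(* Give every vertex w of Gamma^n a level in {0, ..., k+1}: the number of
   short edges needed to reach w from an endpoint of a long vertical edge,
   capped at k+1, where eps (k+1) bounds |f| on K.  Clamping f^n to the
   interval [-eps level, eps level] yields g: it vanishes at the endpoints of
   long vertical edges, moves by at most eps along short edges, and coincides
   with f^n at level k+1.  It remains to see that, for n large, endpoints of
   long horizontal edges have level k+1.  Otherwise there are, for meshes as
   fine as we like, chains of points of K that start with a long almost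
   vertical step, continue with almost axis-parallel steps and end with a long
   almost horizontal step; by Tychonoff these accumulate at an exact such
   chain, and an exact chain contains an array on three points. *)

Section Clamp.
Variable R : realDomainType.
Implicit Types T a e : R.

Definition clamp T a := Num.max (- T) (Num.min T a).

Variant clamp_spec T a : R -> Type :=
  | ClampHi of T <= a : clamp_spec T a T
  | ClampLo of a <= - T : clamp_spec T a (- T)
  | ClampIn of - T <= a & a <= T : clamp_spec T a a.

Lemma clampP T a : 0 <= T -> clamp_spec T a (clamp T a).
Proof.
move=> T0; rewrite /clamp; case: (leP T a) => Ta.
  by rewrite max_r; [constructor | lra].
by case: (leP (- T) a) => Ta'; constructor; lra.
Qed.

Lemma clamp0 a : clamp 0 a = 0.
Proof. by case: (@clampP 0 a (lexx 0)); rewrite ?oppr0 // => *; lra. Qed.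

Lemma clamp_id T a : `|a| <= T -> clamp T a = a.
Proof.
move=> aT; have T0 : 0 <= T := le_trans (normr_ge0 a) aT.
by move: aT; rewrite ler_norml => /andP[? ?]; case: (@clampP T a T0) => *; lra.
Qed.

Lemma norm_clamp_le T a : 0 <= T -> `|clamp T a| <= `|a|.
Proof.
move=> T0; have := ler_norm a; have := ler_norm (- a); rewrite normrN => ? ?.
by case: (@clampP T a T0) => // *; rewrite ?normrN ger0_norm //; lra.
Qed.

Lemma clamp_lipschitz T1 T2 a1 a2 e : 0 <= T1 -> 0 <= T2 ->
  `|T1 - T2| <= e -> `|a1 - a2| <= e -> `|clamp T1 a1 - clamp T2 a2| <= e.
Proof.
rewrite !ler_norml => T10 T20 /andP[? ?] /andP[? ?].
by case: (@clampP T1 a1 T10) => *; case: (@clampP T2 a2 T20) => *; apply/andP; split; lra.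
Qed.
End Clamp.

Lemma distn_le1 (R : realDomainType) (a b : nat) :
  (a <= b.+1)%N -> (b <= a.+1)%N -> `|a%:R - b%:R| <= (1 : R).
Proof.
rewrite -!(ler_nat R) -!natr1 ler_norml => ? ?.
by apply/andP; split; lra.
Qed.

Section Plane.
Variable R : realType.
Implicit Types (a b : R * R) (h : R).

Definition dist1 a b := `|a.1 - b.1| + `|a.2 - b.2|.
Definition axis_gap a b := Num.min `|a.1 - b.1| `|a.2 - b.2|.
Definition coord_close h a b := `|a.1 - b.1| <= h /\ `|a.2 - b.2| <= h.

Lemma euclC a b : eucl a b = eucl b a.
Proof. by rewrite /eucl -sqrrN opprB -[X in _ + X]sqrrN opprB. Qed.

Lemma eucl_lt a b (r : R) : 0 < r ->
  (eucl a b < r) = ((a.1 - b.1) ^+ 2 + (a.2 - b.2) ^+ 2 < r ^+ 2).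
Proof.
by move=> r0; rewrite /eucl -[X in _ < X](gtr0_norm r0) -sqrtr_sqr ltr_sqrt ?exprn_gt0.
Qed.

Lemma eucl_le_dist1 a b : eucl a b <= dist1 a b.
Proof.
rewrite /eucl /dist1 -[X in _ <= X]ger0_norm ?addr_ge0 // -sqrtr_sqr.
apply: ler_wsqrtr; rewrite -(real_normK (num_real (a.1 - b.1))).
rewrite -(real_normK (num_real (a.2 - b.2))).
by rewrite sqrrD lerD2r lerDl mulrn_wge0 // mulr_ge0.
Qed.

Lemma coord_closeC h a b : coord_close h a b -> coord_close h b a.
Proof. by rewrite /coord_close distrC (distrC a.2). Qed.

Lemma dist1_neq (r : R) a b : 0 < r -> r - dist1 a b <= 0 -> a <> b.
Proof. by move=> r0 + eab; rewrite eab /dist1 !subrr normr0 addr0 subr0 leNgt r0. Qed.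

Lemma axis_gap_le0 a b : axis_gap a b <= 0 -> a.1 = b.1 \/ a.2 = b.2.
Proof.
by rewrite ge_min !normr_le0 !subr_eq0 => /orP[/eqP|/eqP]; [left | right].
Qed.

Lemma axis_gap_refl a : axis_gap a a = 0.
Proof. by rewrite /axis_gap !subrr normr0 minxx. Qed.

Lemma in_square_close n u z : in_square n u z -> coord_close (1 / 2 ^+ n) z (latpt R n u).
Proof.
rewrite /in_square /coord_close /latpt /= !intrD !mulrDl => -[/andP[? ?] /andP[? ?]].
have : 0 < 1 / 2 ^+ n :> R by rewrite divr_gt0 ?exprn_gt0.
by split; rewrite ler_norml; apply/andP; split; lra.
Qed.

Lemma distB_le_perturb (x y x' y' e : R) : `|x - x'| <= e -> `|y - y'| <= e ->
  `|x - y| <= `|x' - y'| + 2 * e.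
Proof.
rewrite !ler_norml => /andP[? ?] /andP[? ?].
have := ler_norm (x' - y'); have := ler_norm (- (x' - y')); rewrite normrN.
by move=> ? ?; apply/andP; split; lra.
Qed.

Lemma dist1_le_perturb h a b a' b' : coord_close h a a' -> coord_close h b b' ->
  dist1 a' b' <= dist1 a b + 4 * h.
Proof.
move=> /coord_closeC[a1 a2] /coord_closeC[b1 b2]; rewrite /dist1.
have := distB_le_perturb a1 b1; have := distB_le_perturb a2 b2; lra.
Qed.

Lemma sqr_le_perturb (x y e : R) : 0 <= e -> `|x| <= `|y| + e ->
  x ^+ 2 <= 2 * y ^+ 2 + 2 * e ^+ 2.
Proof.
move=> e0 xy; rewrite -(real_normK (num_real x)) -(real_normK (num_real y)).
have : `|x| ^+ 2 <= (`|y| + e) ^+ 2 by rewrite ler_pXn2r ?nnegrE ?addr_ge0.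
have := sqr_ge0 (`|y| - e); nra.
Qed.

Lemma eucl_lt_perturb h (r : R) a b a' b' : coord_close h a a' -> coord_close h b b' ->
  4 * h <= r -> eucl a' b' < r -> eucl a b < 2 * r.
Proof.
move=> [a1 a2] [b1 b2] hr lt_r; have h0 : 0 <= h by apply: le_trans a1.
have r0 : 0 < r by apply: le_lt_trans lt_r; apply: sqrtr_ge0.
move: lt_r; rewrite !eucl_lt ?mulr_gt0 // => lt_r.
have h2 : 0 <= 2 * h by rewrite mulr_ge0.
have := sqr_le_perturb h2 (distB_le_perturb a1 b1).
have := sqr_le_perturb h2 (distB_le_perturb a2 b2).
nra.
Qed.
End Plane.

Lemma cluster_le0 (R : realType) (T : topologicalType) (phi : T -> R) (q_ : nat -> T) p :
  continuous phi -> (forall m, phi (q_ m) <= m.+1%:R^-1) -> cluster (q_ @ \oo) p ->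
  phi p <= 0.
Proof.
move=> cphi phi_q; rewrite clusterE => clq; apply/ler_addgt0Pr => e e0; rewrite add0r.
have cl : closed (phi @^-1` [set y | y <= e]).
  by apply: preimage_closed => [? _|]; [exact: cphi | exact: closed_le].
suff : closure (phi @^-1` [set y | y <= e]) p by move: cl; rewrite closure_id => <-.
apply: clq.
have [N Ne] : exists N : nat, N.+1%:R^-1 <= e.
  exists (Num.truncn e^-1); rewrite -[X in _ <= X]invrK lef_pV2 ?posrE ?invr_gt0 //.
  exact/ltW/truncnS_gt.
exists N => // m /= Nm; apply: le_trans (phi_q m) (le_trans _ Ne).
by rewrite lef_pV2 ?posrE // ler_nat.
Qed.

Section ArrayPaths.
Variable R : realType.
Variables (K : set (R * R)) (delta : R).
Import ArrowAsProduct.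

Lemma continuous_coord_fst i : continuous (fun q : nat -> R * R => (q i).1).
Proof.
move=> q; apply: (cvg_comp _ _ (@proj_continuous nat (fun=> (R * R)%type) i q)).
exact: cvg_fst.
Qed.

Lemma continuous_coord_snd i : continuous (fun q : nat -> R * R => (q i).2).
Proof.
move=> q; apply: (cvg_comp _ _ (@proj_continuous nat (fun=> (R * R)%type) i q)).
exact: cvg_snd.
Qed.

Lemma continuous_gap_fst i j : continuous (fun q : nat -> R * R => `|(q i).1 - (q j).1|).
Proof.
move=> q; apply: (@cvg_norm _ R^o _ (nbhs q) _ (fun q => (q i).1 - (q j).1)).
by apply: (@cvgB _ R^o); exact: continuous_coord_fst.
Qed.

Lemma continuous_gap_snd i j : continuous (fun q : nat -> R * R => `|(q i).2 - (q j).2|).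
Proof.
move=> q; apply: (@cvg_norm _ R^o _ (nbhs q) _ (fun q => (q i).2 - (q j).2)).
by apply: (@cvgB _ R^o); exact: continuous_coord_snd.
Qed.

Lemma continuous_delta_dist1 i j :
  continuous (fun q : nat -> R * R => delta - dist1 (q i) (q j)).
Proof.
move=> q; apply: (@cvgB _ R^o _ (nbhs q) _ (fun=> delta) (fun q => dist1 (q i) (q j))).
  exact: cvg_cst.
by apply: (@cvgD _ R^o); [exact: continuous_gap_fst | exact: continuous_gap_snd].
Qed.

Lemma continuous_axis_gap i j : continuous (fun q : nat -> R * R => axis_gap (q i) (q j)).
Proof.
move=> q; apply: (@continuous_min _ _ (fun q => `|(q i).1 - (q j).1|)
  (fun q => `|(q i).2 - (q j).2|)); [exact: continuous_gap_fst | exact: continuous_gap_snd].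
Qed.

Definition approx_vert_path (t : R) (q : nat -> R * R) :=
  [/\ forall i, K (q i),
      `|(q 0%N).1 - (q 1%N).1| <= t,
      delta - dist1 (q 0%N) (q 1%N) <= t &
      forall i, axis_gap (q i.+1) (q i.+2) <= t].

Definition approx_array_path (k : nat) (t : R) (q : nat -> R * R) :=
  [/\ approx_vert_path t q,
      `|(q k.+1).2 - (q k.+2).2| <= t &
      delta - dist1 (q k.+1) (q k.+2) <= t].

Lemma approx_array_path_le k t t' q :
  t <= t' -> approx_array_path k t q -> approx_array_path k t' q.
Proof.
move=> tt' [[Kq v01 l01 gap] hk lk].
have le_t' s : s <= t -> s <= t' by move/le_trans; apply.
by split; first split; rewrite ?le_t' // => i; rewrite le_t'.
Qed.

Lemma approx_vert_path_extend t q m y : 0 <= t -> approx_vert_path t q -> K y ->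
  axis_gap (q m.+1) y <= t ->
  approx_vert_path t (fun i => if (i <= m.+1)%N then q i else y).
Proof.
move=> t0 [Kq v01 l01 gap] Ky gap_y; split => // [i|i].
  by case: ifP.
by case: (ltngtP i.+1 m.+1) => [_|_|[->]]; rewrite ?axis_gap_refl.
Qed.

Lemma approx_array_path_limit k : compact K ->
  (forall m : nat, exists q, approx_array_path k m.+1%:R^-1 q) ->
  exists q, approx_array_path k 0 q.
Proof.
move=> cK /choice[q_ q_path].
have cKN : compact [set q : nat -> R * R | forall i, K (q i)] := tychonoff (fun=> cK).
have [|p [Kp clp]] := cKN (q_ @ \oo) _.
  by exists 0%N => // m _; case: (q_path m) => [[]].
have lim0 (phi : (nat -> R * R) -> R) :
    continuous phi -> (forall m, phi (q_ m) <= m.+1%:R^-1) -> phi p <= 0.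
  by move=> cphi phi_q; exact: cluster_le0 cphi phi_q clp.
exists p; split; first split => //.
- by apply: lim0 (continuous_gap_fst (i:=0%N) (j:=1%N)) _ => m; case: (q_path m) => [[]].
- by apply: lim0 (continuous_delta_dist1 (i:=0%N) (j:=1%N)) _ => m; case: (q_path m) => [[]].
- move=> i; apply: lim0 (continuous_axis_gap (i:=i.+1) (j:=i.+2)) _ => m.
  by case: (q_path m) => [[]].
- by apply: lim0 (continuous_gap_snd (i:=k.+1) (j:=k.+2)) _ => m; case: (q_path m).
- by apply: lim0 (continuous_delta_dist1 (i:=k.+1) (j:=k.+2)) _ => m; case: (q_path m).
Qed.

Hypotheses (noK : no_array3 K) (delta_gt0 : 0 < delta).

Definition vertical_partner (p : R * R) := exists2 c, K c & c <> p /\ c.1 = p.1.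

Lemma no_horizontal_partner a p : K a -> K p -> a <> p -> a.2 = p.2 ->
  ~ vertical_partner p.
Proof.
move=> Ka Kp ap a2 [c Kc [cp c1]]; apply: noK.
by exists a, p, c; do !split=> //; [move=> /esym | left].
Qed.

Lemma no_exact_array_path k q : ~ approx_array_path k 0 q.
Proof.
have eq_of_le0 (x y : R) : `|x - y| <= 0 -> x = y by rewrite normr_le0 subr_eq0 => /eqP.
move=> [[Kq v01 l01 gap] hk lk].
have partner i : (i <= k)%N -> vertical_partner (q i.+1).
  elim: i => [_|i IH lik].
    by exists (q 0%N) => //; split; [exact: dist1_neq l01 | exact: eq_of_le0].
  have partner_i := IH (ltnW lik).
  have [->|/eqP ne] := eqVneq (q i.+2) (q i.+1); first exact: partner_i.
  case: (axis_gap_le0 (gap i)) => [e1|e2].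
    by exists (q i.+1) => //; split=> // /esym.
  by have := no_horizontal_partner (Kq _) (Kq _) ne (esym e2) partner_i.
apply: no_horizontal_partner (Kq k.+2) (Kq k.+1) _ _ (partner k (leqnn k)).
  by move=> /esym; exact: dist1_neq lk.
exact/esym/eq_of_le0.
Qed.

Lemma approx_array_path_gap k : compact K ->
  exists2 t, 0 < t & forall q, ~ approx_array_path k t q.
Proof.
move=> cK; apply: contrapT => no_gap.
have [|q] := approx_array_path_limit (k:=k) cK; last exact: no_exact_array_path.
move=> m; apply: contrapT => no_path; apply: no_gap.
by exists m.+1%:R^-1 => // q path_q; apply: no_path; exists q.
Qed.
End ArrayPaths.

Section Grid.
Variable R : realType.
Variables (K : set (R * R)) (delta : R) (n : nat) (x : int * int -> R * R).
Hypothesis x_sample : forall u, vertex K n u -> K (x u) /\ in_square n u (x u).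
Let h : R := 1 / 2 ^+ n.

Lemma mesh_gt0 : 0 < h.
Proof. by rewrite divr_gt0 ?exprn_gt0. Qed.

Lemma mesh4_ge0 : 0 <= 4 * h.
Proof. by rewrite mulr_ge0 // ltW // mesh_gt0. Qed.

Lemma sample_close u : vertex K n u -> coord_close h (x u) (latpt R n u).
Proof. by move=> /x_sample[_ /in_square_close]. Qed.

Lemma edge_sym u1 u2 : edge K n u1 u2 -> edge K n u2 u1.
Proof.
move=> [v1 [v2 [ne uv]]]; do !split => //; first by move=> /esym.
by rewrite distrC [`|(latpt R n u2).2 - _|]distrC.
Qed.

Lemma long_sym u1 u2 : long delta n u1 u2 -> long delta n u2 u1.
Proof. by rewrite /long euclC. Qed.

Lemma vertical_sample_gap u1 u2 : vertex K n u1 -> vertex K n u2 ->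
  vertical R n u1 u2 -> `|(x u1).1 - (x u2).1| <= 4 * h.
Proof.
move=> /sample_close[c1 _] /sample_close[c2 _] v12.
by have := distB_le_perturb c1 c2; have := mesh_gt0; rewrite /vertical -/h in v12; lra.
Qed.

Lemma horizontal_sample_gap u1 u2 : vertex K n u1 -> vertex K n u2 ->
  horizontal R n u1 u2 -> `|(x u1).2 - (x u2).2| <= 4 * h.
Proof.
move=> /sample_close[_ c1] /sample_close[_ c2] h12.
by have := distB_le_perturb c1 c2; have := mesh_gt0; rewrite /horizontal -/h in h12; lra.
Qed.

Lemma edge_axis_gap u1 u2 : edge K n u1 u2 -> axis_gap (x u1) (x u2) <= 4 * h.
Proof.
move=> [v1 [v2 [_ [vert|hor]]]]; rewrite ge_min; apply/orP; [left|right].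
  exact: vertical_sample_gap.
exact: horizontal_sample_gap.
Qed.

Lemma long_sample_dist1 u1 u2 : vertex K n u1 -> vertex K n u2 ->
  long delta n u1 u2 -> delta - dist1 (x u1) (x u2) <= 4 * h.
Proof.
move=> /sample_close c1 /sample_close c2; rewrite /long => long12.
have := eucl_le_dist1 (latpt R n u1) (latpt R n u2).
by have := dist1_le_perturb c1 c2; lra.
Qed.

Lemma short_sample_eucl u1 u2 : vertex K n u1 -> vertex K n u2 ->
  short delta n u1 u2 -> 4 * h <= delta -> eucl (x u1) (x u2) < 2 * delta.
Proof.
by move=> /sample_close c1 /sample_close c2 s12 mesh_le; exact: eucl_lt_perturb c1 c2 mesh_le s12.
Qed.

Definition short_adj u v := short_edge K delta n u v \/ short_edge K delta n v u.
Definition vert_end w := exists v, vert_edge K delta n w v \/ vert_edge K delta n v w.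
Definition hor_end w := exists v, hor_edge K delta n w v \/ hor_edge K delta n v w.

Fixpoint reach (j : nat) (w : int * int) : Prop :=
  if j is j'.+1 then reach j' w \/ exists2 w', reach j' w' & short_adj w' w
  else vert_end w.

Definition sample_path j w (q : nat -> R * R) :=
  approx_vert_path K delta (4 * h) q /\ forall i, (j < i)%N -> q i = x w.

Lemma vert_endP w :
  vert_end w -> exists2 v, edge K n v w & long delta n v w /\ vertical R n v w.
Proof.
move=> [v [[e [l vv]] | [e lv]]]; last by exists v.
by exists v; [exact: edge_sym | rewrite /vertical distrC; split => //; exact: long_sym].
Qed.

Lemma hor_endP w :
  hor_end w -> exists2 v, edge K n w v & long delta n w v /\ horizontal R n w v.
Proof.
move=> [v [hw | [e [l hh]]]]; first by exists v; case: hw.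
by exists v; [exact: edge_sym | rewrite /horizontal distrC; split => //; exact: long_sym].
Qed.

Lemma reach_sample_path j w : reach j w -> exists q, sample_path j w q.
Proof.
elim: j w => [|j IH] w /=.
  move=> /vert_endP[v [vv [vw _]] [long_vw vert_vw]].
  exists (fun i => if i == 0%N then x v else x w); split => [|[|i] //].
  split => [[|i]|||i] /=; rewrite ?axis_gap_refl ?mesh4_ge0 //.
  - exact: (x_sample vv).1.
  - exact: (x_sample vw).1.
  - exact: vertical_sample_gap.
  - exact: long_sample_dist1.
move=> [/IH[q [path_q end_q]] | [w' /IH[q [path_q end_q]] adj]].
  by exists q; split => // i /ltnW; exact: end_q.
have e_w'w : edge K n w' w by case: adj => [[] | [/edge_sym]].
have [_ [vw _]] := e_w'w.
exists (fun i => if (i <= j.+1)%N then q i else x w); split.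
  apply: approx_vert_path_extend; [exact: mesh4_ge0 | by [] | exact: (x_sample vw).1 |].
  by rewrite end_q //; exact: edge_axis_gap.
by move=> i ji; rewrite leqNgt ji.
Qed.

Lemma hor_end_approx_array_path j k u : hor_end u -> (j <= k)%N -> reach j u ->
  exists q, approx_array_path K delta k (4 * h) q.
Proof.
move=> /hor_endP[v e_uv [long_uv hor_uv]] jk /reach_sample_path[q [path_q end_q]].
have [vu [vv _]] := e_uv.
have qk : q k.+1 = x u by apply: end_q; rewrite ltnS.
exists (fun i => if (i <= k.+1)%N then q i else x v); split; rewrite ?leqnn ?ltnn ?qk.
- apply: approx_vert_path_extend; [exact: mesh4_ge0 | by [] | exact: (x_sample vv).1 |].
  by rewrite qk; exact: edge_axis_gap.
- exact: horizontal_sample_gap.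
- exact: long_sample_dist1.
Qed.

(* Since [reach] is monotone in [j], this is the short-edge distance to the
   long vertical edges, capped at [k.+1]. *)
Definition level k w : nat := \sum_(j < k.+1) ~~ `[< reach j w >].

Lemma reach_vert_end j w : vert_end w -> reach j w.
Proof. by move=> vw; elim: j => //= j; left. Qed.

Lemma level_vert_end k w : vert_end w -> level k w = 0%N.
Proof.
by move=> vw; rewrite /level big1 // => j _; rewrite (asboolT (reach_vert_end j vw)).
Qed.

Lemma level_unreached k w :
  (forall j, (j <= k)%N -> ~ reach j w) -> level k w = k.+1.
Proof.
move=> unreached; rewrite /level (eq_bigr (fun=> 1%N)) ?sum1_card ?card_ord // => j _.
by rewrite asboolF //; apply: unreached; rewrite -ltnS.
Qed.

Lemma level_short_adj k u v : short_adj u v -> (level k v <= (level k u).+1)%N.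
Proof.
move=> adj; rewrite /level big_ord_recl [X in (_ <= X.+1)%N]big_ord_recr /= addnC -addn1.
apply: leq_add; last exact: leq_b1.
apply: (leq_trans _ (leq_addr _ _)); apply: leq_sum => j _.
have [reach_u|_] := asboolP (reach j u); last exact: leq_b1.
by rewrite asboolT //=; right; exists u.
Qed.

Section ClampedSample.
Variables (f : R * R -> R) (eps : R) (k : nat).

Definition clamped_sample w := clamp (eps * (level k w)%:R) (f (x w)).

Lemma clamped_sample_short (eps_gt0 : 0 < eps)
    (f_unif : forall x1 x2, K x1 -> K x2 -> eucl x1 x2 < 2 * delta -> `|f x1 - f x2| < eps)
    (mesh_small : 4 * h <= delta) u1 u2 :
  short_edge K delta n u1 u2 -> `|clamped_sample u1 - clamped_sample u2| <= eps.
Proof.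
move=> e12; have [[v1 [v2 _]] s12] := e12.
have eps_ge0 := ltW eps_gt0.
apply: clamp_lipschitz; rewrite ?mulr_ge0 //.
  rewrite -mulrBr normrM gtr0_norm // ger_pMr //.
  by apply: distn_le1; apply: level_short_adj; [right | left].
apply/ltW/f_unif; [exact: (x_sample v1).1 | exact: (x_sample v2).1 |].
exact: short_sample_eucl.
Qed.

Lemma clamped_sample_vert w : vert_end w -> clamped_sample w = 0.
Proof. by move=> vw; rewrite /clamped_sample level_vert_end // mulr0 clamp0. Qed.

Lemma clamped_sample_hor (f_bound : forall z, K z -> `|f z| <= eps * k.+1%:R)
    (no_path : forall q, ~ approx_array_path K delta k (4 * h) q) u :
  hor_end u -> clamped_sample u = f (x u).
Proof.
move=> hu; have [v [vu _] _] := hor_endP hu.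
rewrite /clamped_sample level_unreached ?clamp_id //; first exact: f_bound (x_sample vu).1.
by move=> j jk /(hor_end_approx_array_path hu jk)[q]; apply: no_path.
Qed.

Lemma norm_clamped_sample_le (eps_ge0 : 0 <= eps) w : `|clamped_sample w| <= `|f (x w)|.
Proof. by rewrite norm_clamp_le ?mulr_ge0. Qed.
End ClampedSample.
End Grid.

Lemma continuous_compact_norm_bounded (R : realType) (T : topologicalType)
    (K : set T) (f : T -> R) :
  compact K -> {within K, continuous f} -> exists M, forall z, K z -> `|f z| <= M.
Proof.
move=> cK cf; have [M [_ fM]] := compact_bounded (continuous_compact cf cK).
by exists (M + 1) => z Kz; apply: fM; [rewrite ltrDl | exists z].
Qed.

Lemma mesh_eventually_le (R : realType) (c : R) : 0 < c ->
  exists N, forall n, (N <= n)%N -> 4 * (1 / 2 ^+ n) <= c.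
Proof.
move=> c0; exists (Num.truncn (4 / c)) => n Nn.
have N_lt : 4 / c < (Num.truncn (4 / c)).+1%:R := truncnS_gt _.
rewrite mul1r ler_pdivrMr ?exprn_gt0 // mulrC -ler_pdivrMr //.
apply: ltW (lt_le_trans N_lt _); rewrite -natrX ler_nat.
exact: leq_ltn_trans Nn (ltn_expl _ (ltnSn 1)).
Qed.

Theorem mainTheorem5 (R : realType) (K : set (R * R)) (f : R * R -> R)
    (eps delta : R) :
  compact K -> no_array3 K -> {within K, continuous f} ->
  0 < eps -> 0 < delta ->
  (forall x1 x2, K x1 -> K x2 -> eucl x1 x2 < 2 * delta ->
     `|f x1 - f x2| < eps) ->
  exists n0 : nat, forall n : nat, (n0 <= n)%N ->
    forall x : int * int -> R * R,
      (forall u, vertex K n u -> K (x u) /\ in_square n u (x u)) ->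
      (* f^n u := f (x u) *)
      exists g : int * int -> R,
        (forall u1 u2, short_edge K delta n u1 u2 -> `|g u1 - g u2| <= eps) /\
        (forall u1 u2, hor_edge K delta n u1 u2 ->
           `|f (x u1) - g u1| <= eps /\ `|f (x u2) - g u2| <= eps) /\
        (forall u1 u2, vert_edge K delta n u1 u2 -> g u1 = 0 /\ g u2 = 0) /\
        (forall u, vertex K n u ->
           exists w, vertex K n w /\ `|g u| <= `|f (x w)|).
Proof.
move=> cK noK cf eps_gt0 delta_gt0 f_unif.
have [M f_le_M] := continuous_compact_norm_bounded cK cf.
have [k M_le] : exists k : nat, M <= eps * k.+1%:R.
  by exists (Num.truncn (M / eps)); rewrite mulrC -ler_pdivrMr //; exact/ltW/truncnS_gt.
have [t t_gt0 no_path] := approx_array_path_gap noK delta_gt0 k cK.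
have [N mesh_le] : exists N, forall n, (N <= n)%N -> 4 * (1 / 2 ^+ n) <= Num.min t delta.
  by apply: mesh_eventually_le; rewrite lt_min t_gt0.
exists N => n /mesh_le; rewrite le_min => /andP[mesh_t mesh_delta] x x_sample.
have g_hor u : hor_end K delta n u -> `|f (x u) - clamped_sample K delta n x f eps k u| <= eps.
  move=> hu; rewrite clamped_sample_hor ?subrr ?normr0 ?ltW // => [z Kz|q].
    exact: le_trans (f_le_M z Kz) M_le.
  by move=> /(approx_array_path_le mesh_t); exact: no_path.
exists (clamped_sample K delta n x f eps k); split; [|split; [|split]].
- by move=> u1 u2; apply: clamped_sample_short.
- by move=> u1 u2 e12; split; apply: g_hor; [exists u2; left | exists u1; right].
- move=> u1 u2 e12.
  by split; apply: clamped_sample_vert; [exists u2; left | exists u1; right].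
- by move=> u vu; exists u; split; rewrite // norm_clamped_sample_le ?ltW.
Qed.
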